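(* For every MWSBP instance with $s_i=w_i$ for all items $i\in[n]$, every output of the WFFI-R algorithm has cost at most $\frac{7+\sqrt{37}}{8}\cdot\mathtt{OPT}$.
   Context: Min-Weighted Sum Bin Packing (MWSBP): an instance consists of $n$ items with sizes $s_i\in(0,1]$ and weights $w_i>0$. A feasible solution is a partition of $[n]$ into bins $B_1,\ldots,B_p$ with $\sum_{i\in B_k}s_i\le 1$; its cost is $\sum_{k=1}^p k\sum_{i\in B_k}w_i$; $\mathtt{OPT}$ is the minimum cost. The WFFI-R algorithm: sort the items in nondecreasing order of $s_i/w_i$ (ties broken arbitrarily; when $s_i=w_i$ for all $i$ any order is allowed); process them with First-Fit, i.e., put each item into the earliest-opened bin in which it still fits (total size $\le1$), opening a new bin if it fits in none; finally, reorder the resulting bins in nonincreasing order of their total weight. *)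

From mathcomp Require Import all_boot all_order all_algebra.
Set Implicit Arguments. Unset Strict Implicit. Unset Printing Implicit Defensive.
Import Order.TTheory GRing.Theory Num.Theory.
Local Open Scope ring_scope.

Section MWSBP.
Variables (R : rcfType) (n : nat).

Definition load (f : 'I_n -> R) (B : seq 'I_n) : R := \sum_(j <- B) f j.

Definition cost (w : 'I_n -> R) (L : seq (seq 'I_n)) : R :=
  \sum_(k < size L) (k.+1)%:R * load w (nth [::] L k).

Definition feasible (s : 'I_n -> R) (P : seq (seq 'I_n)) : Prop :=
  perm_eq (flatten P) (enum 'I_n) /\
  all (fun B => B != [::]) P /\
  all (fun B => load s B <= 1) P.

Fixpoint ff_insert (s : 'I_n -> R) (i : 'I_n) (bins : seq (seq 'I_n))
  : seq (seq 'I_n) :=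
  match bins with
  | [::] => [:: [:: i]]
  | B :: bs => if load s B + s i <= 1 then rcons B i :: bs
               else B :: ff_insert s i bs
  end.

Definition first_fit (s : 'I_n -> R) (order : seq 'I_n) : seq (seq 'I_n) :=
  foldl (fun bins i => ff_insert s i bins) [::] order.

(* L is a possible output of WFFI-R: items sorted nondecreasingly by s_i/w_i
   (arbitrary tie breaking), First-Fit, then bins reordered nonincreasingly
   by total weight (arbitrary tie breaking). *)
Definition wffir_output (s w : 'I_n -> R) (L : seq (seq 'I_n)) : Prop :=
  exists order : seq 'I_n,
    [/\ perm_eq order (enum 'I_n),
        sorted (fun i j => s i / w i <= s j / w j) order,
        perm_eq L (first_fit s order) &
        sorted (fun B C => load w C <= load w B) L].

End MWSBP.

(* Since s = w, the items are processed in arbitrary order and WFFI-R is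
   First-Fit followed by sorting the bins by nonincreasing load.  Let S be the
   total size and, in the final packing, g bins of load > 2/3 (total X) followed
   by u bins of load <= 2/3 (total Y).  The proof combines three ingredients:
   - First-Fit: no item fits into an earlier bin, so any two bins together
     exceed 1, and beyond the first bin of load <= 2/3 every item exceeds 1/3;
     hence the later small bins are u - 1 singletons of pairwise incompatible
     items (ff_loads_pairwise, ff_small_bins_items).
   - Chebyshev's sum inequality on the two sorted groups of bins bounds the
     cost by X(g+1)/2 + gY + Y(u+1)/2 (split_loads_bound).
   - Lower bounds on OPT: OPT >= S, OPT >= S(S+1)/2 (the i-th bin holds at most
     one unit), and OPT >= phi_bound (u-1) c S for all c <= u - 1, since no bin
     holds two of the incompatible items (cost_ge_triangle, cost_ge_phi_bound).
   A case analysis on u (ratio_bound), with a sum-of-squares certificate in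
   the hardest case, shows the cost bound is at most r * OPT for the root
   r = (7 + sqrt 37) / 8 of 16r^2 - 28r + 3. *)

From mathcomp Require Import all_boot all_order all_algebra.
From mathcomp Require Import ring lra zify.
Set Implicit Arguments. Unset Strict Implicit. Unset Printing Implicit Defensive.
Import Order.TTheory GRing.Theory Num.Theory.
Local Open Scope ring_scope.
Lemma perm_pairwise (T : eqType) (r : rel T) (s1 s2 : seq T) :
  symmetric r -> perm_eq s1 s2 -> pairwise r s1 = pairwise r s2.
Proof.
move=> r_sym; elim: s1 s2 => [|x s1 IH] s2 hp.
  by move: (perm_size hp) => /= /esym /size0nil ->.
have xs2 : x \in s2 by rewrite -(perm_mem hp) mem_head.
move: hp; case/splitPr: xs2 => a b.
rewrite perm_sym -[x :: b]/([:: x] ++ b) perm_catCA /= perm_cons perm_sym => hp.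
rewrite /= (IH _ hp) (perm_all _ hp) !pairwise_cat allrel_consr all_cat pairwise_cons.
have -> : all (r^~ x) a = all (r x) a by apply: eq_all => y; rewrite r_sym.
by rewrite -!andbA; do !bool_congr.
Qed.

Lemma split_first (T : Type) (p : pred T) (l : seq T) : has p l ->
  exists pre x post, [/\ l = pre ++ x :: post, p x & ~~ has p pre].
Proof.
elim: l => [//|y l IH] /=; case py: (p y) => /= h; first by exists [::], y, l.
have [pre [x [post [-> px hpre]]]] := IH h.
by exists (y :: pre), x, post; rewrite /= py.
Qed.

Lemma pairwise_mem (T : eqType) (r : rel T) (a : seq T) : pairwise r a ->
  {in a &, forall x y, x != y -> r x y || r y x}.
Proof.
elim: a => [//|z a IH] /= /andP [/allP hz pa] x y.
rewrite !inE => /orP [/eqP->|xa] /orP [/eqP->|ya].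
- by rewrite eqxx.
- by move=> _; rewrite hz.
- by move=> _; rewrite hz ?orbT.
- exact: IH.
Qed.

Lemma pairwise_distinct (T : eqType) (r : rel T) (J : seq T) :
  uniq J -> {in J &, forall x y, x != y -> r x y} -> pairwise r J.
Proof.
elim: J => [//|x J IH] /= /andP [xJ uJ] h; apply/andP; split.
  apply/allP => y yJ; apply: h; rewrite ?inE ?eqxx ?yJ ?orbT //.
  by apply: contraNneq xJ => ->.
by apply: IH => // a b aJ bJ; apply: h; rewrite inE ?aJ ?bJ orbT.
Qed.

Lemma flatten_filter_subseq (T : eqType) (p : pred (seq T)) (l : seq (seq T)) :
  subseq (flatten [seq C <- l | p C]) (flatten l).
Proof.
elim: l => [//|C l IH] /=; case: (p C) => /=; first by rewrite cat_subseq ?subseq_refl.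
exact: subseq_trans IH (suffix_subseq _ _).
Qed.

Lemma flatten_singletons (T : Type) (Ls : seq (seq T)) :
  all (fun C => size C == 1%N) Ls -> Ls = [seq [:: x] | x <- flatten Ls].
Proof.
elim: Ls => [//|C Ls IH] /= /andP [hC hL].
by case: C hC => [|x [|y C]] //= _; rewrite -IH.
Qed.

Section RealSequences.
Variable R : realFieldType.
Implicit Types (xs : seq R) (a y : R).

(* If y and the members of a nonempty list ws pairwise sum to more than 1, then
   all of them but at most one exceed 1/2, so y :: ws has sum >= half its length. *)
Lemma pivot_sum_ge y (ws : seq R) : ws != [::] ->
  all (fun z => 1 < y + z) ws -> pairwise (fun a b => 1 < a + b) ws ->
  (size ws)%:R + 1 <= 2 * (y + \sum_(z <- ws) z).
Proof.
elim: ws y => [//|z zs IH] y _ /= /andP [hyz hall] /andP [hz hzs].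
rewrite big_cons; case: zs IH hall hz hzs => [|z' zs] IH hall hz hzs.
  by rewrite big_nil /=; lra.
have [hy|hy] := lerP y (1/2).
- by have := IH y isT hall hzs; rewrite -natr1 /=; lra.
- by have := IH z isT hz hzs; rewrite -natr1 /=; lra.
Qed.

Lemma pairwise_sum_ge xs : (2 <= size xs)%N ->
  pairwise (fun a b => 1 < a + b) xs -> (size xs)%:R <= 2 * \sum_(x <- xs) x.
Proof.
case: xs => [|y ws] //= hsz /andP [hy hws]; rewrite big_cons -natr1.
by apply: pivot_sum_ge; first by case: ws hsz {hy hws}.
Qed.

Lemma sum_le_const xs a : all (fun y => y <= a) xs -> \sum_(y <- xs) y <= (size xs)%:R * a.
Proof.
elim: xs => [|x xs IH] /=; first by rewrite big_nil mul0r.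
by move=> /andP [hx /IH]; rewrite big_cons -natr1 mulrDl mul1r; lra.
Qed.

Lemma sum_ge_const xs a : all (fun y => a <= y) xs -> (size xs)%:R * a <= \sum_(y <- xs) y.
Proof.
elim: xs => [|x xs IH] /=; first by rewrite big_nil mul0r.
by move=> /andP [hx /IH]; rewrite big_cons -natr1 mulrDl mul1r; lra.
Qed.

Lemma sorted_head_max x xs : sorted (fun a b => b <= a) (x :: xs) -> all (fun y => y <= x) xs.
Proof.
by apply: (order_path_min (leT := fun a b => b <= a)) => a b c hba hcb; exact: le_trans hcb hba.
Qed.

(* weighted_sum i0 xs = \sum_k (i0 + k + 1) * xs_k: the cost of bins with loads xs
   placed at positions i0 + 1, i0 + 2, ... *)
Fixpoint weighted_sum (i0 : nat) xs : R :=
  if xs is x :: xs' then i0.+1%:R * x + weighted_sum i0.+1 xs' else 0.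

Lemma weighted_sum_nth i0 xs :
  \sum_(k < size xs) (i0 + k).+1%:R * nth 0 xs k = weighted_sum i0 xs.
Proof.
elim: xs i0 => [|x xs IH] i0 /=; first by rewrite big_ord0.
rewrite big_ord_recl /= addn0 -IH; congr (_ + _).
by apply: eq_bigr => k _; rewrite /bump /= add1n addnS.
Qed.

Lemma weighted_sum_cat i0 xs1 xs2 :
  weighted_sum i0 (xs1 ++ xs2) = weighted_sum i0 xs1 + weighted_sum (i0 + size xs1) xs2.
Proof.
elim: xs1 i0 => [|x xs1 IH] i0 /=; first by rewrite add0r addn0.
by rewrite IH addnS addrA.
Qed.

(* Chebyshev: on nonincreasing values the weights i0+1, ..., i0+m act like their mean. *)
Lemma weighted_sum_sorted i0 xs : sorted (fun a b => b <= a) xs ->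
  2 * weighted_sum i0 xs <= (2 * i0%:R + (size xs)%:R + 1) * \sum_(y <- xs) y.
Proof.
elim: xs i0 => [|x xs IH] i0 /=; first by rewrite big_nil !mulr0.
move=> hp; have hxs := path_sorted hp.
have hall := sorted_head_max hp.
have := IH i0.+1 hxs; have := sum_le_const hall.
rewrite big_cons -!natr1; set Sx := \sum_(y <- xs) y; set W := weighted_sum i0.+1 xs.
move=> h1 h2; have : 0 <= (size xs)%:R * x - Sx by lra.
nra.
Qed.

Lemma sorted_threshold_split xs a : sorted (fun a b => b <= a) xs ->
  all (fun y => a < y) (take (count (fun y => a < y) xs) xs) /\
  all (fun y => y <= a) (drop (count (fun y => a < y) xs) xs).
Proof.
elim: xs => [//|x xs IH] hp /=.
have hxs := path_sorted hp.
have hall := sorted_head_max hp.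
have [hx|hx] := ltrP a x; first by rewrite /= hx; exact: IH.
have c0 : count (fun y => a < y) xs = 0%N.
  by apply/eqP; rewrite -leqn0 leqNgt -has_count; apply/hasP => -[y /(allP hall)]; lra.
rewrite add0n c0 take0 drop0 /= hx; split => //.
by apply/allP => y /(allP hall); lra.
Qed.

Lemma split_loads_bound (ell : seq R) :
  sorted (fun a b => b <= a) ell -> all (fun y => 0 <= y <= 1) ell ->
  pairwise (fun a b => 1 < a + b) ell ->
  let g := count (fun y => 2/3 < y) ell in
  let X := \sum_(y <- take g ell) y in
  let Y := \sum_(y <- drop g ell) y in
  let u := count (fun y => y <= 2/3) ell in
  [/\ weighted_sum 0 ell <= X * (g%:R + 1) / 2 + g%:R * Y + Y * (u%:R + 1) / 2,
      2/3 * g%:R <= X <= g%:R, 0 <= Y <= u%:R,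
      (u == 1)%N -> Y <= 2/3 & (2 <= u)%N -> u%:R <= 2 * Y].
Proof.
move=> hsort hbnd hpw g X Y u.
have [hA hB] := sorted_threshold_split (2/3) hsort.
have sA : size (take g ell) = g by rewrite size_take_min; apply/minn_idPl; exact: count_size.
have sB : size (drop g ell) = u.
  rewrite size_drop -(count_predC (fun y => 2/3 < y)) addKn.
  by apply: eq_count => y /=; rewrite -leNgt.
have A1 : all (fun y => y <= 1) (take g ell).
  by apply/allP => y /mem_take /(allP hbnd) /andP [].
have A23 : all (fun y => 2/3 <= y) (take g ell) by apply/allP => y /(allP hA); lra.
have B0 : all (fun y => 0 <= y) (drop g ell).
  by apply/allP => y /mem_drop /(allP hbnd) /andP [].
have X1 := sum_le_const A1; have X2 := sum_ge_const A23.
have Y0 := sum_ge_const B0; have Y23 := sum_le_const hB.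
rewrite sA sB mulr1 mulr0 -/X -/Y in X1 X2 Y0 Y23.
have hcost : weighted_sum 0 ell <= X * (g%:R + 1) / 2 + g%:R * Y + Y * (u%:R + 1) / 2.
  have c1 := weighted_sum_sorted 0 (take_sorted g hsort).
  have c2 := weighted_sum_sorted g (drop_sorted g hsort).
  rewrite -(cat_take_drop g ell) weighted_sum_cat add0n sA.
  by move: c1 c2; rewrite sA sB -/X -/Y; lra.
split => //; [lra | lra | by move=> /eqP hu; move: Y23; rewrite hu; lra |].
move=> hu; rewrite -sB; apply: pairwise_sum_ge; first by rewrite sB.
exact: subseq_pairwise (drop_subseq ell g) hpw.
Qed.

(* The two arithmetic series behind the lower bounds on OPT. *)
Lemma sum_fill_levels (c : nat) (S : R) :
  \sum_(t < c) (S - t%:R) = c%:R * S - c%:R * (c%:R - 1) / 2.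
Proof.
elim: c => [|c IH]; first by rewrite big_ord0 !mul0r subr0.
by rewrite big_ord_recr /= IH -natr1; field.
Qed.

Lemma sum_large_levels (m : nat) :
  \sum_(j < m) ((m%:R - j%:R) / 2 - 1/6 : R) = m%:R * (m%:R + 1) / 4 - m%:R / 6.
Proof.
elim: m => [|m IH]; first by rewrite big_ord0 !mul0r subrr.
rewrite big_ord_recl /=.
have -> : \sum_(i < m) ((m.+1%:R - (bump 0 i)%:R) / 2 - 1/6 : R)
  = \sum_(i < m) ((m%:R - i%:R) / 2 - 1/6).
  by apply: eq_bigr => i _; rewrite /bump /= add1n -!natr1; field.
by rewrite IH -natr1; field.
Qed.

End RealSequences.

(* The lower bound on OPT coming from h pairwise-incompatible items (see
   cost_ge_phi_bound): the first c bins are filled as much as possible, the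
   later ones still contain the incompatible items not yet packed. *)
Definition phi_bound (R : realFieldType) (h c S : R) : R :=
  c * S - c * (c - 1) / 2 + (h - c) * (h - c + 1) / 4 - (h - c) / 6.

Section RatioInequalities.
Variable R : realFieldType.

Lemma nat_ceil (w : R) (N : nat) : 0 <= w -> w <= N%:R ->
  exists c : nat, [/\ w <= c%:R, c%:R < w + 1 & (c <= N)%N].
Proof.
move=> w0 wN; have ex : exists k : nat, w <= k%:R by exists N.
case: (ex_minnP ex) => c hc hmin; exists c; split => //; last exact: hmin.
case: c hc hmin => [|c] hc hmin; first by lra.
rewrite ltNge; apply/negP => h.
have : (c.+1 <= c)%N by apply: hmin; move: h; rewrite -natr1; lra.
by rewrite ltnn.
Qed.

(* Filling c = ceil S unit bins completely gives the triangle bound S(S+1)/2. *)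
Lemma stair_ge_triangle (c : nat) (S : R) : S <= c%:R -> c%:R < S + 1 ->
  S * (S + 1) / 2 <= c%:R * S - c%:R * (c%:R - 1) / 2.
Proof.
move=> h1 h2; have : 0 <= (c%:R - S) * (S + 1 - c%:R) by apply: mulr_ge0; lra.
nra.
Qed.

Lemma phi_bound_vertex (h c S : R) :
  phi_bound h c S = phi_bound h (2 * S - h + 5/6) S - (c - (2 * S - h + 5/6)) ^+ 2 / 4.
Proof. by rewrite /phi_bound; field. Qed.

(* The approximation ratio (7 + sqrt 37) / 8 is characterised as the root of
   16r^2 - 28r + 3 lying in (49/30, 18/11); only these facts are used. *)
Definition ratio_spec (r : R) :=
  [/\ 16 * r ^+ 2 - 28 * r + 3 = 0, 49/30 < r & r < 18/11].

Variables (r : R) (hr : ratio_spec r).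

(* Main inequality when the total size S is small relative to the number h + 1
   of small bins: compare against phi_bound at its vertex. *)
Lemma phi_vertex_region (X Y h : R) : 1 <= h -> h + 1 <= 2 * Y -> 0 <= X ->
  3/4 * X ^+ 2 + X / 2 + 3/2 * X * Y + Y * (h + 2) / 2 <=
  r * (phi_bound h (2 * (X + Y) - h + 5/6) (X + Y) - 1/16).
Proof.
have [r_root r_lo r_hi] := hr.
move=> h1 hY X0.
set e := Y - h / 2.
set a1 := r * 5 / 6 - 1 / 2.
set V := (8 * r - 6) * (X + Y - h / 2) - 3 * h.
set T := (8 * r - 6) * (h - 1/2 + 8 * r / 9) + h * (33 - 20 * r) / 3 - 16 * a1 ^+ 2.
have key : 8 * (8 * r - 6) * (r * (phi_bound h (2 * (X + Y) - h + 5/6) (X + Y) - 1/16)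
    - (3/4 * X ^+ 2 + X / 2 + 3/2 * X * Y + Y * (h + 2) / 2))
  = (V + 4 * a1) ^+ 2 + (8 * r - 6) * ((2 * e - 1) * (3 * e - 1/2 + h)) + T
    + (h ^+ 2 + h / 3) * (16 * r ^+ 2 - 28 * r + 3).
  by rewrite /T /V /e /a1 /phi_bound; field.
rewrite r_root mulr0 addr0 in key.
have T0 : 0 <= T.
  have -> : T = (h - 1) * (4 * r + 15) / 3 + (57/4 - 5 * r) / 3
                - (16 * r ^+ 2 - 28 * r + 3) / 4 by rewrite /T /a1; field.
  have : 0 <= (h - 1) * (4 * r + 15) by apply: mulr_ge0; lra.
  rewrite r_root; lra.
have e1 : 0 <= (2 * e - 1) * (3 * e - 1/2 + h) by apply: mulr_ge0; rewrite /e; lra.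
have p1 : 0 <= (8 * r - 6) * ((2 * e - 1) * (3 * e - 1/2 + h)) by apply: mulr_ge0 => //; lra.
have sq : 0 <= (V + 4 * a1) ^+ 2 by exact: sqr_ge0.
have pos : 0 < 8 * (8 * r - 6) by lra.
by rewrite -subr_ge0 -(pmulr_rge0 _ pos) key; lra.
Qed.

(* Main inequality when S is large: the triangle bound suffices. *)
Lemma triangle_region (X Y h : R) : 0 <= X -> 0 <= Y ->
  h <= X + Y + 1/6 -> h + 1 <= 2 * Y ->
  3/4 * X ^+ 2 + X / 2 + 3/2 * X * Y + Y * (h + 2) / 2 <= r * ((X + Y) * (X + Y + 1) / 2).
Proof.
have [_ r_lo _] := hr.
move=> X0 Y0 hS hY; set d := r - 49/30.
have d0 : 0 <= d by rewrite /d; lra.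
have a1 : 0 <= Y * (X + Y + 1/6 - h) by apply: mulr_ge0; lra.
have a2 : 0 <= Y * (2 * Y - 1 - h) by apply: mulr_ge0; lra.
have s1 : 0 <= (X - Y) ^+ 2 by exact: sqr_ge0.
have s2 : 0 <= X * Y by exact: mulr_ge0.
have b1 : 0 <= d * (X - Y) ^+ 2 by exact: mulr_ge0.
have b2 : 0 <= d * (X * Y) by exact: mulr_ge0.
have b3 : 0 <= d * X by exact: mulr_ge0.
have b4 : 0 <= d * Y by exact: mulr_ge0.
have -> : r = d + 49/30 by rewrite /d; ring.
nra.
Qed.

Lemma ratio_no_small (g : nat) (X OPT : R) :
  2/3 * g%:R <= X -> X * (X + 1) / 2 <= OPT -> X * (g%:R + 1) / 2 <= r * OPT.
Proof.
have [_ r_lo _] := hr.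
move=> hX hT; have X0 : 0 <= X by have := ler0n R g; lra.
have : 0 <= X * (r * (X + 1) - (g%:R + 1)) by apply: mulr_ge0 => //; nra.
nra.
Qed.

Lemma ratio_one_small (g : nat) (X Y OPT : R) :
  2/3 * g%:R <= X <= g%:R -> 0 <= Y <= 2/3 ->
  X + Y <= OPT -> (X + Y) * (X + Y + 1) / 2 <= OPT ->
  X * (g%:R + 1) / 2 + g%:R * Y + Y <= r * OPT.
Proof.
have [_ r_lo _] := hr.
case: g => [|g] /andP [hX1 hX2] /andP [Y0 Y23] hS hT.
  have -> : X = 0 by lra.
  by nra.
have X23 : 2/3 <= X by move: hX1; rewrite -natr1; have := ler0n R g; nra.
have hg : (g.+1%:R : R) <= 3/2 * X by lra.
have X0 : 0 <= X by lra.
have k1 : X * (g.+1%:R + 1) / 2 + g.+1%:R * Y + Y <= (3/2 * X + 1) * (X / 2 + Y).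
  have : 0 <= (3/2 * X - g.+1%:R) * (X / 2 + Y) by apply: mulr_ge0; lra.
  nra.
have k2 : (3/2 * X + 1) * (X / 2 + Y) <= r * ((X + Y) * (X + Y + 1) / 2).
  have p1 : 0 <= (r - 3/2) * (X * Y) by apply: mulr_ge0; [lra|exact: mulr_ge0].
  have p2 : 0 <= (r / 2 - 3/4) * X ^+ 2 by apply: mulr_ge0; [lra|exact: sqr_ge0].
  have p3 : 0 <= r * Y ^+ 2 by apply: mulr_ge0; [lra|exact: sqr_ge0].
  have p4 : 0 <= (r - 3/2) * Y by apply: mulr_ge0; lra.
  nra.
nra.
Qed.

(* At least two small bins (h + 1 of them, pairwise incompatible, so 2Y >= h + 1). *)
Lemma ratio_many_small (g h : nat) (X Y OPT : R) :
  (1 <= h)%N -> 2/3 * g%:R <= X -> 0 <= Y -> h%:R + 1 <= 2 * Y ->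
  (X + Y) * (X + Y + 1) / 2 <= OPT ->
  (forall c : nat, (c <= h)%N -> phi_bound h%:R c%:R (X + Y) <= OPT) ->
  X * (g%:R + 1) / 2 + g%:R * Y + Y * (h%:R + 2) / 2 <= r * OPT.
Proof.
have [_ r_lo _] := hr.
move=> h1 hX1 Y0 hY hT hphi.
have X0 : 0 <= X by have := ler0n R g; lra.
have r0 : 0 <= r by lra.
have h1' : 1 <= (h%:R : R) by rewrite ler1n.
have kF : X * (g%:R + 1) / 2 + g%:R * Y + Y * (h%:R + 2) / 2
   <= 3/4 * X ^+ 2 + X / 2 + 3/2 * X * Y + Y * (h%:R + 2) / 2.
  have : 0 <= (3/2 * X - g%:R) * (X / 2 + Y) by apply: mulr_ge0; lra.
  nra.
apply: (le_trans kF); have [hS|hS] := ltrP (h%:R - 1/6) (X + Y).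
  apply: le_trans (triangle_region X0 Y0 _ hY) _; first lra.
  exact: ler_wpM2l.
have [c [c1 c2 ch]] : exists c : nat, [/\ 2 * (X + Y) - h%:R + 1/3 <= c%:R,
    c%:R < 2 * (X + Y) - h%:R + 1/3 + 1 & (c <= h)%N] by apply: nat_ceil; lra.
apply: le_trans (phi_vertex_region h1' hY X0) _; apply: ler_wpM2l => //.
apply: le_trans (hphi c ch); rewrite [X in _ <= X]phi_bound_vertex.
have : (c%:R - (2 * (X + Y) - h%:R + 5/6)) ^+ 2 <= 1/4.
  have : 0 <= (c%:R - (2 * (X + Y) - h%:R + 5/6) + 1/2)
              * (1/2 - (c%:R - (2 * (X + Y) - h%:R + 5/6))) by apply: mulr_ge0; lra.
  nra.
lra.
Qed.

Lemma ratio_bound (g u : nat) (X Y OPT : R) :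
  2/3 * g%:R <= X <= g%:R -> 0 <= Y <= u%:R ->
  ((u == 1)%N -> Y <= 2/3) -> ((2 <= u)%N -> u%:R <= 2 * Y) ->
  X + Y <= OPT -> (X + Y) * (X + Y + 1) / 2 <= OPT ->
  ((1 <= u)%N -> forall c : nat, (c <= u.-1)%N -> phi_bound u.-1%:R c%:R (X + Y) <= OPT) ->
  X * (g%:R + 1) / 2 + g%:R * Y + Y * (u%:R + 1) / 2 <= r * OPT.
Proof.
move=> /andP [hX1 hX2] /andP [Y0 Yu] hu1 hu2 hS hT hphi.
case: u Yu hu1 hu2 hphi => [|[|h]] Yu hu1 hu2 hphi.
- have Y_eq0 : Y = 0 by lra.
  move: hT; rewrite Y_eq0 !(mul0r, mulr0, addr0); exact: ratio_no_small.
- have -> : Y * (1%:R + 1) / 2 = Y by field.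
  apply: ratio_one_small => //; [by rewrite hX1 | by rewrite Y0 hu1].
- have -> : (h.+2%:R : R) + 1 = h.+1%:R + 2 by rewrite -natr1; ring.
  apply: ratio_many_small => //; last exact: hphi.
  by rewrite natr1; apply: hu2.
Qed.

End RatioInequalities.

(* The actual ratio: 91/15 < sqrt 37 < 67/11 gives the two bounds. *)
Lemma ratio_spec_rho (R : rcfType) : ratio_spec ((7 + Num.sqrt 37) / 8 : R).
Proof.
have q0 : 0 <= Num.sqrt (37 : R) by exact: sqrtr_ge0.
have q2 : Num.sqrt (37 : R) ^+ 2 = 37 by rewrite sqr_sqrtr.
split.
- have -> : 16 * ((7 + Num.sqrt 37) / 8) ^+ 2 - 28 * ((7 + Num.sqrt 37) / 8) + 3
      = (Num.sqrt 37 ^+ 2 - 37) / 4 :> R by field.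
  by rewrite q2 subrr mul0r.
- have : 91/15 < Num.sqrt (37 : R).
    rewrite ltNge; apply/negP => h.
    by have := ler_pM q0 q0 h h; rewrite -expr2 q2; lra.
  lra.
- have : Num.sqrt (37 : R) < 67/11.
    rewrite ltNge; apply/negP => h; have h0 : (0 : R) <= 67/11 by lra.
    by have := ler_pM h0 h0 h h; rewrite -[Num.sqrt 37 * _]expr2 q2; lra.
  lra.
Qed.

Lemma loads_ratio (R : realFieldType) (r : R) (ell : seq R) (S OPT : R) :
  ratio_spec r -> sorted (fun a b => b <= a) ell -> all (fun y => 0 <= y <= 1) ell ->
  pairwise (fun a b => 1 < a + b) ell -> \sum_(y <- ell) y = S ->
  S <= OPT -> S * (S + 1) / 2 <= OPT ->
  ((1 <= count (fun y => (y <= 2/3)%R) ell)%N -> forall c : nat,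
     (c <= (count (fun y => (y <= 2/3)%R) ell).-1)%N ->
     phi_bound (count (fun y => y <= 2/3) ell).-1%:R c%:R S <= OPT) ->
  weighted_sum 0 ell <= r * OPT.
Proof.
move=> hr hsort hbnd hpw hS hOPT1 hOPT2 hOPT3.
have [hcost hX hY hu1 hu2] := split_loads_bound hsort hbnd hpw.
have eS : \sum_(y <- take (count (fun y => 2/3 < y) ell) ell) y
        + \sum_(y <- drop (count (fun y => 2/3 < y) ell) ell) y = S.
  by rewrite -big_cat cat_take_drop.
apply: le_trans hcost _; apply: ratio_bound => //; by rewrite eS.
Qed.

Lemma cost_weighted_sum (R : rcfType) (n : nat) (w : 'I_n -> R) (L : seq (seq 'I_n)) :
  cost w L = weighted_sum 0 [seq load w B | B <- L].
Proof.
rewrite -weighted_sum_nth size_map /cost; apply: eq_bigr => k _.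
by rewrite add0n (nth_map [::]).
Qed.

Section Loads.
Variables (R : rcfType) (n : nat) (s : 'I_n -> R).
Hypothesis s_ge0 : forall i, 0 <= s i.

Lemma load_cat (A B : seq 'I_n) : load s (A ++ B) = load s A + load s B.
Proof. by rewrite /load big_cat. Qed.

Lemma load_rcons (B : seq 'I_n) i : load s (rcons B i) = load s B + s i.
Proof. by rewrite -cats1 load_cat /load big_seq1. Qed.

Lemma load_flatten (P : seq (seq 'I_n)) : load s (flatten P) = \sum_(B <- P) load s B.
Proof. by rewrite /load big_flatten. Qed.

Lemma load_ge0 (A : seq 'I_n) : 0 <= load s A.
Proof. by rewrite /load; apply: sumr_ge0 => i _. Qed.

Lemma load_filter (A : seq 'I_n) (p : pred 'I_n) : load s [seq x <- A | p x] <= load s A.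
Proof. by rewrite /load big_filter [X in _ <= X](bigID p) /= lerDl sumr_ge0. Qed.

Lemma mem_load x (C : seq 'I_n) : x \in C -> s x <= load s C.
Proof.
elim: C => [//|y C IH]; rewrite inE /load big_cons -/(load s C) => /orP [/eqP ->|xC].
  by rewrite lerDl load_ge0.
by apply: le_trans (IH xC) _; rewrite lerDr.
Qed.

Lemma load_prefix_le (P : seq (seq 'I_n)) t :
  all (fun B => load s B <= 1) P -> load s (flatten (take t P)) <= t%:R.
Proof.
elim: P t => [|B P IH] [|t] //=; rewrite ?take0 /load ?big_nil //.
move=> /andP [hB hP]; rewrite big_cat -natr1 addrC.
by apply: lerD => //; exact: IH.
Qed.

(* tail_load P t: the total load of the bins after the first t; summing it over
   t counts each bin once per position up to its own, which is the cost. *)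
Definition tail_load (P : seq (seq 'I_n)) t := load s (flatten (drop t P)).

Lemma cost_tail_sum (P : seq (seq 'I_n)) : cost s P = \sum_(t < size P) tail_load P t.
Proof.
elim: P => [|B P IH]; first by rewrite /cost !big_ord0.
rewrite /cost /= !big_ord_recl /= /tail_load /= load_cat mul1r.
have -> : \sum_(i < size P) (bump 0 i).+1%:R * load s (nth [::] P (0 + i))
    = cost s P + load s (flatten P).
  rewrite /cost load_flatten (big_nth [::]) big_mkord -big_split /=.
  apply: eq_bigr => i _; rewrite /bump /= add1n add0n.
  by rewrite -[i.+2]addn1 natrD mulrDl mul1r.
rewrite IH /tail_load /=; under [in RHS]eq_bigr => i _ do rewrite add0n.
ring.
Qed.

End Loads.

Section OptLowerBounds.
Variables (R : rcfType) (n : nat) (s : 'I_n -> R).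
Hypothesis s_ge0 : forall i, 0 <= s i.
Variable P : seq (seq 'I_n).
Hypothesis P_perm : perm_eq (flatten P) (enum 'I_n).
Hypothesis P_cap : all (fun B => load s B <= 1) P.

Local Notation S := (load s (flatten P)).

Lemma tail_load_ge0 t : 0 <= tail_load s P t.
Proof. exact: load_ge0. Qed.

(* The bins after the first t still hold everything that the first t cannot. *)
Lemma tail_load_ge_fill t : S - t%:R <= tail_load s P t.
Proof.
have := load_prefix_le t P_cap.
have : tail_load s P t + load s (flatten (take t P)) = S.
  by rewrite /tail_load addrC -load_cat -flatten_cat cat_take_drop.
lra.
Qed.

(* Every bin is counted at least once in the cost. *)
Lemma cost_ge_total : S <= cost s P.
Proof.
rewrite cost_tail_sum; case: P => [|B P'] /=; first by rewrite /load big_nil big_ord0.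
by rewrite big_ord_recl lerDl; apply: sumr_ge0 => t _; exact: load_ge0.
Qed.

(* Staircase bound: the first c levels of the cost are each at least S - t. *)
Lemma cost_ge_stair (c : nat) : c%:R < S + 1 ->
  c%:R * S - c%:R * (c%:R - 1) / 2 <= cost s P.
Proof.
move=> hc; have hsize := load_prefix_le (size P) P_cap; rewrite take_size in hsize.
have cP : (c <= size P)%N by rewrite -ltnS -(ltr_nat R) -natr1; lra.
rewrite cost_tail_sum -(big_mkord xpredT) (big_cat_nat (leq0n c) cP) /=.
rewrite -sum_fill_levels -[X in X <= _]addr0 big_mkord; apply: lerD.
  by apply: ler_sum => t _; exact: tail_load_ge_fill.
by apply: sumr_ge0 => t _; exact: tail_load_ge0.
Qed.

(* With c the ceiling of S, the staircase bound is at least S(S+1)/2. *)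
Lemma cost_ge_triangle : S * (S + 1) / 2 <= cost s P.
Proof.
have hsize := load_prefix_le (size P) P_cap; rewrite take_size in hsize.
have [c [c1 c2 _]] := nat_ceil (load_ge0 s_ge0 (flatten P)) hsize.
exact: le_trans (stair_ge_triangle c1 c2) (cost_ge_stair c2).
Qed.

(* Lower bound from a family I of items that pairwise do not fit together and
   each exceed 1/3: no bin holds two of them, so the bins after the first t
   still hold at least |I| - t of them. *)
Variable I : seq 'I_n.
Hypothesis I_uniq : uniq I.
Hypothesis I_incompat : {in I &, forall x y, x != y -> 1 < s x + s y}.
Hypothesis I_big : {in I, forall x, 1/3 < s x}.

Lemma large_items_load (J : seq 'I_n) : uniq J -> {subset J <= I} -> J != [::] ->
  (size J)%:R / 2 - 1/6 <= load s J.
Proof.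
case: J => [//|x J] uJ sJ _; have xI : x \in I by apply: sJ; rewrite mem_head.
case: J uJ sJ => [|y J] uJ sJ; first by rewrite /load big_seq1 /=; have := I_big xI; lra.
have pw : pairwise (fun a b => 1 < a + b) [seq s z | z <- x :: y :: J].
  rewrite pairwise_map; apply: pairwise_distinct => // a b aJ bJ.
  by apply: I_incompat; apply: sJ.
have := pairwise_sum_ge _ pw; rewrite size_map big_map -/(load s _) => /(_ isT); lra.
Qed.

Lemma bin_large_count (B : seq 'I_n) : uniq B -> load s B <= 1 -> (count (mem I) B <= 1)%N.
Proof.
move=> uB hB; rewrite leqNgt; apply/negP => h2.
have hF := load_filter s_ge0 B (mem I).
have uF : uniq [seq x <- B | x \in I] by exact: filter_uniq.
have inI x : x \in [seq x <- B | x \in I] -> x \in I by rewrite mem_filter => /andP [].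
move: h2 hF uF inI; rewrite -size_filter.
case: [seq x <- B | x \in I] => [|x [|y rest]] //= _ hF /andP [xn _] inI.
have xy : x != y by apply: contraNneq xn => ->; rewrite mem_head.
have := I_incompat (inI x (mem_head _ _)) (inI y _) xy; rewrite ?inE ?eqxx ?orbT //.
have := load_ge0 s_ge0 rest; move: hF hB; rewrite /load !big_cons; lra.
Qed.

Lemma prefix_large_count t : (count (mem I) (flatten (take t P)) <= t)%N.
Proof.
have : uniq (flatten P) by rewrite (perm_uniq P_perm) enum_uniq.
elim: P P_cap t => [|B P' IH] hcap [|t] //=; rewrite ?take0 //=.
rewrite cat_uniq => /and3P [uB _ uP']; move: hcap => /andP [hB hP'].
by rewrite count_cat -add1n; apply: leq_add; [exact: bin_large_count | exact: IH].
Qed.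

Lemma large_count_total : count (mem I) (flatten P) = size I.
Proof.
rewrite (permP P_perm) -size_filter; apply: perm_size; apply: uniq_perm => //.
  by apply: filter_uniq; exact: enum_uniq.
by move=> x; rewrite mem_filter mem_enum andbT.
Qed.

Lemma tail_load_ge_large t : (t < size I)%N ->
  ((size I)%:R - t%:R) / 2 - 1/6 <= tail_load s P t.
Proof.
move=> ht; have uP : uniq (flatten P) by rewrite (perm_uniq P_perm) enum_uniq.
set J := filter (mem I) (flatten (drop t P)).
have sJ : (size I - t <= size J)%N.
  have : size I = (count (mem I) (flatten (take t P)) + count (mem I) (flatten (drop t P)))%N.
    by rewrite -large_count_total -count_cat -flatten_cat cat_take_drop.
  by have := prefix_large_count t; rewrite /J size_filter; lia.
have uJ : uniq J.
  apply: filter_uniq; move: uP; rewrite -{1}(cat_take_drop t P) flatten_cat cat_uniq.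
  by case/and3P.
have subJ : {subset J <= I} by move=> x; rewrite mem_filter => /andP [].
have neJ : J != [::] by rewrite -size_eq0 -lt0n; apply: leq_trans sJ; rewrite subn_gt0.
have := large_items_load uJ subJ neJ; have := load_filter s_ge0 (flatten (drop t P)) (mem I).
have : ((size I)%:R - t%:R : R) <= (size J)%:R by rewrite -natrB ?ler_nat // ltnW.
rewrite /tail_load -/J; lra.
Qed.

(* The first c levels are bounded as in cost_ge_stair, the next |I| - c by the
   incompatible items; this sums to phi_bound. *)
Lemma cost_ge_phi_bound (c : nat) : (c <= size I)%N ->
  phi_bound (size I)%:R c%:R S <= cost s P.
Proof.
move=> hc; have hIP : (size I <= size P)%N.
  by rewrite -large_count_total -{1}(take_size P) prefix_large_count.
rewrite cost_tail_sum -(big_mkord xpredT) (big_cat_nat (leq0n c) (leq_trans hc hIP)).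
rewrite (big_cat_nat hc hIP) /= /phi_bound.
have fill : c%:R * S - c%:R * (c%:R - 1) / 2 <= \sum_(0 <= t < c) tail_load s P t.
  by rewrite -sum_fill_levels big_mkord; apply: ler_sum => t _; exact: tail_load_ge_fill.
have large : ((size I)%:R - c%:R) * ((size I)%:R - c%:R + 1) / 4 - ((size I)%:R - c%:R) / 6
    <= \sum_(c <= t < size I) tail_load s P t.
  have -> : \sum_(c <= t < size I) tail_load s P t
      = \sum_(0 <= j < size I - c) tail_load s P (j + c) by rewrite -{1}[c]add0n big_addn.
  rewrite -natrB // -sum_large_levels big_mkord.
  apply: ler_sum => j _; apply: le_trans (tail_load_ge_large _); last by have := ltn_ord j; lia.
  by rewrite natrB // natrD; lra.
have rest : 0 <= \sum_(size I <= t < size P) tail_load s P t.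
  by apply: sumr_ge0 => t _; exact: tail_load_ge0.
lra.
Qed.

End OptLowerBounds.

Section FirstFit.
Variables (R : rcfType) (n : nat) (s : 'I_n -> R).
Hypothesis s_range : forall i, 0 < s i <= 1.

Lemma s_ge0 i : 0 <= s i. Proof. by case/andP: (s_range i) => /ltW. Qed.

(* The First-Fit invariant: no item of a later bin would fit into an earlier one. *)
Fixpoint ff_closed (bs : seq (seq 'I_n)) : bool :=
  if bs is B :: bs' then all (fun x => 1 < load s B + s x) (flatten bs') && ff_closed bs'
  else true.

Definition ff_valid (bs : seq (seq 'I_n)) :=
  [&& ff_closed bs, all (fun B => B != [::]) bs & all (fun B => load s B <= 1) bs].

Lemma ff_insert_perm i bs : perm_eq (flatten (ff_insert s i bs)) (i :: flatten bs).
Proof.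
elim: bs => [|B bs IH] //=; case: ifP => _ /=; first by rewrite -cats1 -catA perm_catCA.
apply: (perm_trans (y := B ++ i :: flatten bs)); first by rewrite perm_cat2l.
by rewrite -cat1s perm_catCA.
Qed.

Lemma ff_insert_valid i bs : ff_valid bs -> ff_valid (ff_insert s i bs).
Proof.
elim: bs => [|B bs IH] /=.
  by move=> _; rewrite /ff_valid /= /load big_seq1; case/andP: (s_range i) => _ ->.
rewrite /ff_valid /= => /and3P [/andP [hB cbs] /andP [nB nbs] /andP [lB lbs]].
case: ifP => hfit /=.
- rewrite cbs nbs lbs load_rcons hfit -size_eq0 size_rcons /= !andbT.
  by apply/allP => x /(allP hB); have := s_ge0 i; lra.
- have := IH; rewrite /ff_valid cbs nbs lbs => /(_ isT) /and3P [-> -> ->].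
  rewrite nB lB !andbT; apply/allP => x.
  rewrite (perm_mem (ff_insert_perm i bs)) inE => /orP [/eqP ->|xb].
    by rewrite ltNge hfit.
  exact: (allP hB).
Qed.

Lemma ff_fold_spec (order : seq 'I_n) bs : ff_valid bs ->
  let bs' := foldl (fun b i => ff_insert s i b) bs order in
  ff_valid bs' /\ perm_eq (flatten bs') (flatten bs ++ order).
Proof.
elim: order bs => [|i order IH] bs hbs /=; first by rewrite cats0.
have [h1 h2] := IH _ (ff_insert_valid i hbs); split => //.
apply: (perm_trans h2); rewrite -cat1s catA perm_cat2r.
by apply: (perm_trans (ff_insert_perm i bs)); rewrite -cat1s perm_catC.
Qed.

Lemma first_fit_spec (order : seq 'I_n) :
  ff_valid (first_fit s order) /\ perm_eq (flatten (first_fit s order)) order.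
Proof. exact: ff_fold_spec order [::] isT. Qed.

Lemma ff_closed_suffix a b : ff_closed (a ++ b) -> ff_closed b.
Proof. by elim: a => [//|B a IH] /= /andP [_ /IH]. Qed.

Lemma ff_closed_pairwise bs : ff_closed bs ->
  pairwise (fun C D => all (fun y => 1 < load s C + s y) D) bs.
Proof.
elim: bs => [//|B bs IH] /= /andP [hB cbs]; rewrite IH // andbT.
by apply/allP => C Cb; apply/allP => y yC; apply: (allP hB); apply/flattenP; exists C.
Qed.

Lemma ff_loads_pairwise bs : ff_valid bs ->
  pairwise (fun B C => 1 < load s B + load s C) bs.
Proof.
move=> /and3P [cbs nbs _].
apply: (sub_in_pairwise (P := fun B => B != [::])) nbs (ff_closed_pairwise cbs).
move=> B [|x C] _ // _ hC.
by apply: lt_le_trans (allP hC x (mem_head _ _)) _; rewrite lerD2l (mem_load s_ge0) ?mem_head.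
Qed.

(* After the first bin of load at most 2/3 every item exceeds 1/3, so the later
   such bins are singletons whose items pairwise do not fit together. *)
Lemma ff_small_bins_items bs : ff_valid bs -> uniq (flatten bs) ->
  let u := count (fun B => load s B <= 2/3) bs in (1 <= u)%N ->
  exists I : seq 'I_n, [/\ uniq I, size I = u.-1,
    {in I &, forall x y, x != y -> 1 < s x + s y} & {in I, forall x, 1/3 < s x}].
Proof.
set p := fun B => load s B <= 2/3.
move=> /and3P [cb nb lb] ub u hu; have : has p bs by rewrite has_count.
move=> /split_first [pre [B0 [post [E pB hpre]]]].
have cE : u = (count p post).+1.
  by rewrite /u E count_cat /= pB; move: hpre; rewrite has_count lt0n negbK => /eqP ->.
rewrite cE /=.
have /andP [hall cpost] : ff_closed (B0 :: post) by move: cb; rewrite E; exact: ff_closed_suffix.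
have npost : all (fun B => B != [::]) post by move: nb; rewrite E all_cat /= => /and3P [].
have upost : uniq (flatten post) by move: ub; rewrite E flatten_cat cat_uniq /= cat_uniq => /and5P [].
set Ls := [seq C <- post | p C].
have big13 x : x \in flatten post -> 1/3 < s x by move=> /(allP hall); move: pB; rewrite /p; lra.
have sing : all (fun C => size C == 1%N) Ls.
  apply/allP => C; rewrite mem_filter => /andP [pC Cp].
  have CI : {subset C <= flatten post} by move=> x xC; apply/flattenP; exists C.
  case: C pC Cp CI => [|a [|b C]] // pC Cp CI; first by have := allP npost _ Cp.
  have ha := big13 a (CI a (mem_head _ _)).
  have hb := big13 b (CI b ltac:(by rewrite !inE eqxx orbT)).
  move: pC; rewrite /p /load !big_cons -/(load s C).
  by have := load_ge0 (@s_ge0) C; lra.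
have subI : subseq (flatten Ls) (flatten post) by exact: flatten_filter_subseq.
exists (flatten Ls); split.
- exact: subseq_uniq subI upost.
- by rewrite -(size_map (fun x => [:: x])) -flatten_singletons // size_filter.
- move=> x y xI yI xy.
  have := subseq_pairwise (filter_subseq p post) (ff_closed_pairwise cpost).
  rewrite -/Ls (flatten_singletons sing) pairwise_map => /pairwise_mem /(_ x y xI yI xy).
  by rewrite /= /load !big_seq1 !andbT addrC orbb.
- by move=> x /(mem_subseq subI); exact: big13.
Qed.

End FirstFit.

Lemma wffir_loads (R : rcfType) (n : nat) (s : 'I_n -> R) (order : seq 'I_n)
    (L : seq (seq 'I_n)) :
  (forall i, 0 < s i <= 1) -> perm_eq order (enum 'I_n) -> perm_eq L (first_fit s order) ->
  let ell := [seq load s B | B <- L] in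
  let u := count (fun y => (y <= 2/3)%R) ell in
  [/\ perm_eq (flatten L) (enum 'I_n), all (fun y => 0 <= y <= 1) ell,
      pairwise (fun a b => 1 < a + b) ell &
      (1 <= u)%N -> exists I : seq 'I_n, [/\ uniq I, size I = u.-1,
        {in I &, forall x y, x != y -> 1 < s x + s y} & {in I, forall x, 1/3 < s x}]].
Proof.
move=> hs hord hLF ell u.
have [hF hFperm] := first_fit_spec hs order.
have hFe := perm_trans hFperm hord.
have hLe := perm_trans (perm_flatten hLF) hFe.
split => //.
- rewrite all_map (perm_all _ hLF); case/and3P: hF => _ _ /allP hcap.
  by apply/allP => B /hcap /= ->; rewrite load_ge0 //; exact: s_ge0.
- rewrite pairwise_map (perm_pairwise _ hLF); last by move=> B C; rewrite /= addrC.
  exact: ff_loads_pairwise.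
- rewrite /u /ell count_map (permP hLF); apply: ff_small_bins_items => //.
  by rewrite (perm_uniq hFe) enum_uniq.
Qed.

Theorem theorem2 (R : rcfType) (n : nat) (s : 'I_n -> R)
  (hs : forall i, 0 < s i <= 1)
  (L : seq (seq 'I_n)) (hL : wffir_output s s L)
  (P : seq (seq 'I_n)) (hP : feasible s P) :
  cost s L <= (7 + Num.sqrt 37) / 8 * cost s P.
Proof.
case: hL => order [hord _ hLF hLsort]; case: hP => hPperm [_ hPcap].
have [hLe hbnd hpw hsmall] := wffir_loads hs hord hLF.
have hS : \sum_(y <- [seq load s B | B <- L]) y = load s (flatten P).
  by rewrite big_map -load_flatten /load (perm_big _ hLe) (perm_big _ hPperm).
rewrite cost_weighted_sum; apply: (loads_ratio (ratio_spec_rho R) _ hbnd hpw hS).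
- by rewrite sorted_map.
- exact: cost_ge_total (s_ge0 hs) _.
- exact: cost_ge_triangle (s_ge0 hs) _ hPcap.
- move=> hu c hc; have [I [uI sI hinc hbig]] := hsmall hu.
  by rewrite -sI; apply: cost_ge_phi_bound => //; [exact: s_ge0 | rewrite sI].
Qed.
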